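(* Let $g_n$ denote the parity of the number of digits equal to $1$ in the negabinary representation of $n$. Then for every integer $m\ge0$: $g_{2^m-1}=0$ if $m=0$; $g_{2^m-1}=1$ if $m=1$; $g_{2^m-1}=1$ if $m\ge2$ is even; and $g_{2^m-1}=0$ if $m\ge3$ is odd.
   Context: Every nonnegative integer $n$ has a unique representation $n=\sum_{i\ge0} d_i(-2)^i$ with digits $d_i\in\{0,1\}$, only finitely many nonzero; this is the negabinary representation. Parity means the number modulo $2$. *)

From mathcomp Require Import all_boot all_order all_algebra.
Set Implicit Arguments. Unset Strict Implicit. Unset Printing Implicit Defensive.
Import GRing.Theory Num.Theory.
Local Open Scope ring_scope.

Definition negabinary_value (ds : seq nat) : int :=
  \sum_(i < size ds) (nth 0%N ds i)%:Z * (-2) ^+ i.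

Definition is_negabinary (ds : seq nat) (n : nat) : Prop :=
  all (fun d => (d <= 1)%N) ds /\ negabinary_value ds = n%:Z.

Definition ones (ds : seq nat) : nat := count (pred1 1%N) ds.

From mathcomp Require Import all_boot all_order all_algebra zify ring.
Import GRing.Theory Num.Theory.
Local Open Scope ring_scope.

(* The negabinary representation is unique up to trailing zeros: a digit
   string's value determines its lowest digit by parity, and the rest by
   induction, so the number of ones depends only on the value.  Explicit
   representations then settle the parity: [2^(2k) - 1 = 1 - 2 + (-2)^(2k)]
   has three ones, and [2^(2k+1) - 1 = 1 - 2 + (-2)^(2k+1) + (-2)^(2k+2)]
   has four. *)

Lemma negabinary_value_nil : negabinary_value [::] = 0.
Proof. by rewrite /negabinary_value big_ord0. Qed.

Lemma negabinary_value_cons d s :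
  negabinary_value (d :: s) = d%:Z + (-2) * negabinary_value s.
Proof.
rewrite /negabinary_value big_ord_recl /= expr0 mulr1 mulr_sumr.
by congr (_ + _); apply: eq_bigr => i _; rewrite exprS mulrCA.
Qed.

Lemma negabinary_value_cat s t :
  negabinary_value (s ++ t) =
    negabinary_value s + (-2) ^+ size s * negabinary_value t.
Proof.
elim: s => [|d s IH]; first by rewrite negabinary_value_nil add0r mul1r.
by rewrite cat_cons !negabinary_value_cons IH /= exprS; ring.
Qed.

Lemma negabinary_value_nseq0 k : negabinary_value (nseq k 0%N) = 0.
Proof.
elim: k => [|k IH]; first exact: negabinary_value_nil.
by rewrite /= negabinary_value_cons IH mulr0 addr0.
Qed.

Definition binary_digits (ds : seq nat) : bool := all (fun d => (d <= 1)%N) ds.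

Lemma ones_negabinary_value0 {ds : seq nat} :
  binary_digits ds -> negabinary_value ds = 0 -> ones ds = 0%N.
Proof.
elim: ds => [|d ds IH] //= /andP[d_le1 dsP]; rewrite negabinary_value_cons => v0.
have d0 : d = 0%N by lia.
rewrite d0 /= IH //; apply: (mulfI (_ : -2 != 0 :> int)) => //; lia.
Qed.

Lemma ones_negabinary_unique ds es :
  binary_digits ds -> binary_digits es ->
  negabinary_value ds = negabinary_value es -> ones ds = ones es.
Proof.
elim: ds es => [|a ds IH] [|b es] // dsP esP value_eq.
- by rewrite (ones_negabinary_value0 esP) // -value_eq negabinary_value_nil.
- by rewrite (ones_negabinary_value0 dsP) // value_eq negabinary_value_nil.
move: dsP esP value_eq => /= /andP[a_le1 dsP] /andP[b_le1 esP].
rewrite !negabinary_value_cons => value_eq.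
have a_eq_b : a = b by lia.
rewrite /ones /= -/(ones ds) -/(ones es) a_eq_b (IH es) //.
apply: (mulfI (_ : -2 != 0 :> int)) => //; lia.
Qed.

Definition negabinary_pred_pow2 (m : nat) : seq nat :=
  match m with
  | 0 => [::]
  | 1 => [:: 1]
  | k.+2 => [:: 1; 1] ++ nseq k 0 ++ (if odd k then [:: 1; 1] else [:: 1])
  end%N.

Lemma pred_pow2_int m : ((2 ^ m).-1)%:Z = 2 ^+ m - 1.
Proof. by rewrite -subn1 -subzn ?expn_gt0 // -natz natrX. Qed.

Lemma is_negabinary_pred_pow2 m :
  is_negabinary (negabinary_pred_pow2 m) (2 ^ m).-1.
Proof.
case: m => [|[|k]]; rewrite /is_negabinary /=.
- by rewrite negabinary_value_nil.
- by rewrite negabinary_value_cons negabinary_value_nil.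
split; first by rewrite all_cat all_nseq orbT; case: odd.
have sign_cancel : (-2) ^+ k * (if odd k then -1 else 1) = 2 ^+ k :> int.
  rewrite (_ : -2 = -1 * 2) // exprMn -signr_odd.
  by case: odd; rewrite ?expr1 ?expr0; ring.
have tail_value : negabinary_value (if odd k then [:: 1; 1] else [:: 1])%N
                  = if odd k then -1 else 1.
  by case: odd; rewrite !negabinary_value_cons negabinary_value_nil.
rewrite pred_pow2_int !negabinary_value_cons negabinary_value_cat.
rewrite negabinary_value_nseq0 size_nseq tail_value sign_cancel !exprS; ring.
Qed.

Lemma odd_ones_pred_pow2 k :
  odd (ones (negabinary_pred_pow2 k.+2)) = ~~ odd k.
Proof. by rewrite /ones /= count_cat count_nseq mul0n; case: (odd k). Qed.

Theorem corollary1 (m : nat) :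
  (exists ds : seq nat, is_negabinary ds (2 ^ m).-1) /\
  (forall ds : seq nat, is_negabinary ds (2 ^ m).-1 ->
     odd (ones ds) =
       (if m == 0%N then false
        else if m == 1%N then true
        else if ~~ odd m then true
        else false)).
Proof.
have [witP witV] := is_negabinary_pred_pow2 m.
split; first by exists (negabinary_pred_pow2 m); split.
move=> ds [dsP dsV].
rewrite (@ones_negabinary_unique ds (negabinary_pred_pow2 m)) ?dsV ?witV //.
case: m {witP witV dsV} => [|[|k]] //.
by rewrite odd_ones_pred_pow2 /=; case: (odd k).
Qed.
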